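(* Let $k$ be a field and $n\geq1$. Let $U=\{g(t_1)\cdots g(t_n): g(x)\in k[x],\ g(0)\neq0\}\subseteq k[s_1(t),\dots,s_n(t)]$ and $H_n=U^{-1}k[s_1(t),\dots,s_n(t)]$. Let $\psi\colon H_n\to A$ be a homomorphism of $k$-algebras, put $u_i=\psi(s_i(t))$ for $i=1,\dots,n$ and $F_n^\psi(x)=x^n-u_1x^{n-1}+\cdots+(-1)^nu_n\in A[x]$. Then the $A$-module $A\otimes_k k[x]_{(x)}/(F_n^\psi(x))$ is free of rank $n$ with a basis consisting of the classes of $1,x,\dots,x^{n-1}$. In particular, with $F_n(x)=x^n-s_1(t)x^{n-1}+\cdots+(-1)^ns_n(t)\in H_n[x]$, the $H_n$-module $H_n\otimes_k k[x]_{(x)}/(F_n(x))$ is free of rank $n$ with a basis consisting of the classes of $1,x,\dots,x^{n-1}$.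
   Context: $s_i(t)$ is the $i$-th elementary symmetric polynomial in the variables $t_1,\dots,t_n$ of the polynomial ring $k[t_1,\dots,t_n]$. $k[x]_{(x)}$ is the localization of $k[x]$ at the multiplicative set of polynomials $g(x)$ with $g(0)\neq0$; $A[x]=A\otimes_k k[x]$. *)

From HB Require Import structures.
From mathcomp Require Import all_boot all_order all_algebra.
From mathcomp Require Import mpoly.
Set Implicit Arguments. Unset Strict Implicit. Unset Printing Implicit Defensive.
Import Order.TTheory GRing.Theory.
Local Open Scope ring_scope.

Notation "x %:F" := (@FracField.tofrac _ x) : ring_scope.

(* The ring H_n = U^{-1} k[s_1(t),...,s_n(t)], realised inside the     *)
(* field of fractions K = k(t_1,...,t_n) of {mpoly k[n]}.              *)

(* s_i(t), the i-th elementary symmetric polynomial (s_0 = 1). *)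
Definition esym (k : fieldType) (n i : nat) : {mpoly k[n]} := mesym n k i.

Definition in_ksym (k : fieldType) (n : nat) (p : {mpoly k[n]}) : Prop :=
  exists q : {mpoly k[n]}, p = q \mPo [tuple esym k n i.+1 | i < n].

Definition Uelt (k : fieldType) (n : nat) (g : {poly k}) : {mpoly k[n]} :=
  \prod_(i < n) (map_poly (@mpolyC n k) g).['X_i].

Definition in_Hn (k : fieldType) (n : nat) (x : {fraction {mpoly k[n]}}) : Prop :=
  exists (f : {mpoly k[n]}) (g : {poly k}),
    [/\ in_ksym f, g.[0] != 0 & x = f%:F / (Uelt n g)%:F].

(* The module (B[x] localised at {g(x) : g in k[x], g(0) != 0}) / (F), *)
(* for a commutative ring B receiving k via iota, and its sub-version  *)
(* over a subring R of B (coefficients restricted to R).               *)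

Definition locS (k : fieldType) (B : comNzRingType) (iota : k -> B)
  (w : {poly B}) : Prop :=
  exists g : {poly k}, g.[0] != 0 /\ w = map_poly iota g.

(* p / g and q / h have the same class in R[x]_S / (F) :
   p/g - q/h = F * r / w, i.e. w * (p h - q g) = F * r for some w in S and
   r in R[x] (this is what equality of classes unfolds to). *)
Definition loc_congr (k : fieldType) (B : comNzRingType) (iota : k -> B)
  (R : B -> Prop) (F p g q h : {poly B}) : Prop :=
  exists (w r : {poly B}),
    [/\ locS iota w, (forall j, R r`_j) & w * (p * h - q * g) = F * r].

Definition loc_quot_basis (k : fieldType) (B : comNzRingType) (iota : k -> B)
  (R : B -> Prop) (F : {poly B}) (n : nat) : Prop :=
  (forall p g : {poly B}, (forall j, R p`_j) -> locS iota g ->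
     exists a : 'I_n -> B, (forall i, R (a i)) /\
       loc_congr iota R F p g (\sum_(i < n) a i *: 'X^i) 1)
  /\
  (forall a : 'I_n -> B, (forall i, R (a i)) ->
     loc_congr iota R F (\sum_(i < n) a i *: 'X^i) 1 0 1 ->
     forall i, a i = 0).

Definition Fpsi (k : fieldType) (n : nat) (A : comNzRingType)
  (psi : {fraction {mpoly k[n]}} -> A) : {poly A} :=
  \sum_(i < n.+1) ((-1) ^+ i * psi (esym k n i)%:F) *: 'X^(n - i).

(* Over H_n the polynomial F = (x - t_1)...(x - t_n) is monic of degree n.
   For g in k[x] with g(0) != 0, each x - t_i divides g(x) - g(t_i), so F
   divides P(g(x)), where P(y) = (y - g(t_1))...(y - g(t_n)) has coefficients
   symmetric in t, i.e. in k[s], and constant term (-1)^n g(t_1)...g(t_n), a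
   unit of H_n.  This gives v g + u F = 1 with v, u in H_n[x], an identity that
   any homomorphism psi carries to A[x].  Once every such g(x) is invertible
   modulo the monic F, localising at them does not change the quotient by F,
   and division by F shows that 1, x, ..., x^(n-1) is a basis. *)

From Pilot Require Import Defs.
From HB Require Import structures.
From mathcomp Require Import all_boot all_order all_algebra.
From mathcomp Require Import perm mpoly.
From mathcomp Require Import ring zify.
Import Order.TTheory GRing.Theory.
Local Open Scope ring_scope.

Record subring_pred {B : comNzRingType} (R : B -> Prop) : Prop := SubringPred {
  subring0 : R 0;
  subring1 : R 1;
  subringD : forall x y, R x -> R y -> R (x + y);
  subringN : forall x, R x -> R (- x);
  subringM : forall x y, R x -> R y -> R (x * y) }.
Arguments subring0 {B R}.
Arguments subring1 {B R}.
Arguments subringD {B R}.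
Arguments subringN {B R}.
Arguments subringM {B R}.

Definition coefs_in {B : comNzRingType} (R : B -> Prop) (p : {poly B}) : Prop :=
  forall j, R p`_j.

Section CoefsIn.
Context {B : comNzRingType} {R : B -> Prop} (subR : subring_pred R).
Local Notation coefs_in := (coefs_in R).

Lemma coefs_in0 : coefs_in 0.
Proof. by move=> j; rewrite coef0; exact: subring0. Qed.

Lemma coefs_in1 : coefs_in 1.
Proof. by move=> j; rewrite coef1; case: (j == 0)%N; [exact: subring1 | exact: subring0]. Qed.

Lemma coefs_inX1 : coefs_in 'X.
Proof. by move=> j; rewrite coefX; case: (j == 1)%N; [exact: subring1 | exact: subring0]. Qed.

Lemma coefs_inD {p q} : coefs_in p -> coefs_in q -> coefs_in (p + q).
Proof. by move=> pR qR j; rewrite coefD; exact: subringD. Qed.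

Lemma coefs_inN {p} : coefs_in p -> coefs_in (- p).
Proof. by move=> pR j; rewrite coefN; exact: subringN. Qed.

Lemma coefs_inZ {c p} : R c -> coefs_in p -> coefs_in (c *: p).
Proof. by move=> cR pR j; rewrite coefZ; exact: subringM. Qed.

Lemma subring_sum I (r : seq I) (P : pred I) (f : I -> B) :
  (forall i, P i -> R (f i)) -> R (\sum_(i <- r | P i) f i).
Proof. by apply: big_ind; [exact: subring0 | exact: subringD]. Qed.

Lemma subring_sign m : R ((-1) ^+ m).
Proof.
elim: m => [|m IHm]; first exact: subring1.
by rewrite exprS; apply: (subringM subR) IHm; apply: (subringN subR); exact: subring1.
Qed.

Lemma coefs_in_sum I (r : seq I) (P : pred I) (f : I -> {poly B}) :
  (forall i, P i -> coefs_in (f i)) -> coefs_in (\sum_(i <- r | P i) f i).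
Proof. by move=> fR j; rewrite coef_sum; apply: subring_sum => i /fR. Qed.

Lemma coefs_inM {p q} : coefs_in p -> coefs_in q -> coefs_in (p * q).
Proof. by move=> pR qR j; rewrite coefM; apply: subring_sum => i _; exact: subringM. Qed.

Lemma coefs_inX {p} m : coefs_in p -> coefs_in (p ^+ m).
Proof.
by move=> pR; elim: m => [|m IHm]; [exact: coefs_in1 | rewrite exprS; exact: coefs_inM].
Qed.

Section MonicDivision.
Context {F : {poly B}} (monF : F \is monic) (FR : coefs_in F).

Lemma coefs_in_divmod {p} : coefs_in p ->
  exists q r, [/\ coefs_in q, coefs_in r, (size r < size F)%N & p = q * F + r].
Proof.
elim: {p}(size p).+1 {-2}p (ltnSn (size p)) => // m IHm p ltpm pR.
have [ltpF | leFp] := ltnP (size p) (size F).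
  by exists 0, p; rewrite mul0r add0r; split=> //; exact: coefs_in0.
set d := (size p - size F)%N; set c := p`_(size p).-1.
have cXdR : coefs_in (c *: 'X^d).
  by apply: coefs_inZ; [exact: pR | apply: coefs_inX; exact: coefs_inX1].
(* Subtracting c x^d F cancels the leading coefficient c of p, as F is monic. *)
pose p' := p - c *: 'X^d * F.
have ltp'p : (size p' < size p)%N.
  have szF : (0 < size F)%N by rewrite size_poly_gt0 monic_neq0.
  suff : (size p' <= (size p).-1)%N by lia.
  apply/leq_sizeP => j lepj; rewrite coefB -scalerAl coefZ coefXnM.
  have -> : (j < d)%N = false by apply/negbTE; rewrite -leqNgt /d; lia.
  move: lepj; rewrite leq_eqVlt => /orP[/eqP eqj | ltpj].
    have -> : (j - d = (size F).-1)%N by rewrite -eqj /d; lia.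
    by rewrite -/(lead_coef F) (monicP monF) mulr1 -eqj subrr.
  have lepj' : (size p <= j)%N by lia.
  have leFjd : (size F <= j - d)%N by rewrite /d; lia.
  by rewrite !nth_default ?mulr0 ?subr0.
have p'R : coefs_in p' := coefs_inD pR (coefs_inN (coefs_inM cXdR FR)).
have [q [r [qR rR ltrF Ep']]] := IHm _ (leq_trans ltp'p ltpm) p'R.
exists (q + c *: 'X^d), r; split=> //; first exact: coefs_inD.
by rewrite mulrDl -addrAC -Ep' subrK.
Qed.

Lemma monicM_size_lt q : (size (F * q)%R < size F)%N -> q = 0.
Proof.
apply: contraTeq => nz_q; rewrite -leqNgt size_monicM //.
by have := size_poly_gt0 q; rewrite nz_q; lia.
Qed.

Lemma coefs_in_monic_quotient {u} : coefs_in (u * F) -> coefs_in u.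
Proof.
move=> uFR; have [q [r [qR _ ltrF uFE]]] := coefs_in_divmod uFR.
suff -> : u = q by [].
apply/eqP; rewrite -subr_eq0; apply/eqP/monicM_size_lt.
by rewrite mulrBr ![F * _]mulrC uFE addrC addKr.
Qed.

Lemma coefs_in_bezout_cofactor {v G u} :
  coefs_in v -> coefs_in G -> v * G + u * F = 1 -> coefs_in u.
Proof.
move=> vR GR vGuF; apply: coefs_in_monic_quotient.
rewrite -(addKr (v * G) (u * F)) vGuF.
exact/coefs_inD/coefs_in1/coefs_inN/coefs_inM.
Qed.

Section Basis.
Context {k : fieldType} {iota : k -> B} {n : nat}.
Hypotheses (iotaR : forall c, R (iota c)) (iota0 : iota 0 = 0) (iota1 : iota 1 = 1).
Hypothesis sizeF : size F = n.+1.
Hypothesis invertible_modF : forall g : {poly k}, g.[0] != 0 ->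
  exists v u, coefs_in v /\ v * map_poly iota g + u * F = 1.

Lemma loc_quot_spanning p g : coefs_in p -> locS iota g ->
  exists a : 'I_n -> B, (forall i, R (a i)) /\
    loc_congr iota R F p g (\sum_(i < n) a i *: 'X^i) 1.
Proof.
move=> pR [g0 [g00 ->]]; set G := map_poly iota g0.
have [v [u [vR vGuF]]] := invertible_modF _ g00.
have GR : coefs_in G by move=> j; rewrite coef_map_id0.
have uR := coefs_in_bezout_cofactor vR GR vGuF.
have [q [r [qR rR ltrF pvE]]] := coefs_in_divmod (coefs_inM pR vR).
exists (fun i => r`_i); split=> [i|]; first exact: rR.
rewrite -poly_def -/(take_poly n r) take_poly_id; last by rewrite -ltnS -sizeF.
exists 1, (p * u + q * G); split.
- exists 1; split; first by rewrite hornerC oner_neq0.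
  by apply/polyP => j; rewrite coef_map_id0 // !coefC; case: (j == 0)%N.
- by apply: coefs_inD; apply: coefs_inM.
- have -> : r = p * v - q * F by rewrite pvE addrC addKr.
  transitivity (p * (1 - (v * G + u * F)) + F * (p * u + q * G)); first by ring.
  by rewrite vGuF subrr mulr0 add0r.
Qed.

Lemma loc_quot_free a : (forall i, R (a i)) ->
  loc_congr iota R F (\sum_(i < n) a i *: 'X^i) 1 0 1 -> forall i, a i = 0.
Proof.
move=> _ [w [r [[g0 [g00 ->]] _ wSE]]] i.
have [v [u [_ vGuF]]] := invertible_modF _ g00.
set S := \sum_(i < n) a i *: 'X^i in wSE *.
set G := map_poly iota g0 in wSE vGuF.
have SE : S = F * (v * r + u * S).
  transitivity (S * (v * G + u * F) + v * (F * r - G * (S * 1 - 0 * 1))); last by ring.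
  by rewrite vGuF wSE subrr mulr0 mulr1 addr0.
have leSn : (size S <= n)%N.
  apply/leq_sizeP => j lenj; rewrite coef_sum big1 // => l _.
  by rewrite coefZ coefXn gtn_eqF ?mulr0 // (leq_trans (ltn_ord l)).
have S0 : S = 0.
  have ltSF : (size (F * (v * r + u * S))%R < size F)%N by rewrite -SE sizeF.
  by rewrite SE (monicM_size_lt _ ltSF) mulr0.
have coefSi : S`_i = a i.
  rewrite coef_sum (bigD1 i) //= coefZ coefXn eqxx mulr1 big1 ?addr0 // => l.
  by rewrite -val_eqE coefZ coefXn eq_sym => /negbTE ->; rewrite mulr0.
by rewrite -coefSi S0 coef0.
Qed.

Lemma loc_quot_basis_of_invertible_modF : loc_quot_basis iota R F n.
Proof. by split; [exact: loc_quot_spanning | exact: loc_quot_free]. Qed.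

End Basis.
End MonicDivision.
End CoefsIn.

Section MorphismOnSubring.
Context {B A : comNzRingType} {R : B -> Prop} (subR : subring_pred R) {f : B -> A}.
Hypotheses (fD : forall x y, R x -> R y -> f (x + y) = f x + f y)
           (fM : forall x y, R x -> R y -> f (x * y) = f x * f y).

Lemma morph_in0 : f 0 = 0.
Proof. by apply: (addrI (f 0)); rewrite -fD ?addr0 //; exact: (subring0 subR). Qed.

Lemma morph_inN x : R x -> f (- x) = - f x.
Proof.
move=> Rx; apply: (addrI (f x)).
by rewrite -fD ?subrr ?morph_in0 //; exact: (subringN subR).
Qed.

Lemma morph_in_signM m x : R x -> f ((-1) ^+ m * x) = (-1) ^+ m * f x.
Proof.
move=> Rx; elim: m => [|m IHm]; first by rewrite !mul1r.
rewrite !exprS !mulN1r !mulNr morph_inN ?IHm //.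
exact: (subringM subR _ _ (subring_sign subR m) Rx).
Qed.

Lemma morph_in_sum I (r : seq I) (P : pred I) (F : I -> B) :
  (forall i, P i -> R (F i)) -> f (\sum_(i <- r | P i) F i) = \sum_(i <- r | P i) f (F i).
Proof.
move=> FR; pose RF x y := R x /\ f x = y.
suff [] : RF (\sum_(i <- r | P i) F i) (\sum_(i <- r | P i) f (F i)) by [].
apply: (big_ind2 RF); first by split; [exact: (subring0 subR) | exact: morph_in0].
  by move=> x1 y1 x2 y2 [Rx1 <-] [Rx2 <-]; split; [exact: (subringD subR) | exact: fD].
by move=> i /FR.
Qed.

Lemma map_poly_inD p q : coefs_in R p -> coefs_in R q ->
  map_poly f (p + q) = map_poly f p + map_poly f q.
Proof.
move=> pR qR; apply/polyP => j.
by rewrite coefD !coef_map_id0 ?morph_in0 // coefD fD.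
Qed.

Lemma map_poly_inM p q : coefs_in R p -> coefs_in R q ->
  map_poly f (p * q) = map_poly f p * map_poly f q.
Proof.
move=> pR qR; apply/polyP => j.
rewrite coef_map_id0 ?morph_in0 // !coefM morph_in_sum => [|i _]; last exact: (subringM subR).
by apply: eq_bigr => i _; rewrite fM // !coef_map_id0 ?morph_in0.
Qed.

End MorphismOnSubring.

Lemma prod_sub_horner_factor {T : comNzRingType} {n : nat} (G : {poly T}) (a : 'I_n -> T) :
  exists h, \prod_(i < n) (G - (G.[a i])%:P) = h * \prod_(i < n) ('X - (a i)%:P).
Proof.
have root_a i : exists h, G - (G.[a i])%:P = h * ('X - (a i)%:P).
  by apply/factor_theorem; rewrite /root hornerD hornerN hornerC subrr.
have [h hE] := fin_all_exists root_a.
by exists (\prod_i h i); rewrite -big_split; apply: eq_bigr => i _; exact: hE.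
Qed.

Lemma comp_poly_coef0 {T : comNzRingType} (P G : {poly T}) :
  P \Po G = (P`_0)%:P + (drop_poly 1 P \Po G) * G.
Proof.
have takeP1 : take_poly 1 P = (P`_0)%:P.
  by apply/polyP => -[|j]; rewrite coef_take_poly coefC.
by rewrite -{1}(poly_take_drop 1 P) takeP1 comp_polyD comp_polyC comp_polyM comp_polyX.
Qed.

Section SymmetricFunctions.
Context {k : fieldType} {n : nat}.
Local Notation T := {mpoly k[n]}.
Local Notation K := {fraction T}.
Local Notation ksym := (@in_ksym k n).
Local Notation Hn := (@in_Hn k n).
Local Notation Cpoly g := (map_poly (@mpolyC n k) g).

Lemma in_ksym_subring : subring_pred ksym.
Proof.
split.
- by exists 0; rewrite comp_mpoly0.
- by exists 1; rewrite comp_mpoly1.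
- by move=> _ _ [a ->] [b ->]; exists (a + b); rewrite comp_mpolyD.
- by move=> _ [a ->]; exists (- a); rewrite comp_mpolyN.
- by move=> _ _ [a ->] [b ->]; exists (a * b); rewrite rmorphM.
Qed.

Lemma in_ksymC c : ksym c%:MP.
Proof. by exists c%:MP; rewrite comp_mpolyC. Qed.

Lemma in_ksym_symmetric p : p \is symmetric -> ksym p.
Proof. by case/sym_fundamental => t [<- _]; exists t. Qed.

Lemma msym_horner_X (g : {poly k}) (s : 'S_n) i :
  msym s (Cpoly g).['X_i] = (Cpoly g).['X_(s i)].
Proof.
have msymXi : msym s ('X_i : T) = 'X_(s i).
  rewrite msymX; congr mpolyX; apply/mnmP => j; rewrite mnmE !mnm1E.
  by rewrite -(inj_eq (@perm_inj _ s)) permKV.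
have msymC c : msym s (c%:MP : T) = c%:MP.
  by rewrite -[c%:MP]mulr1 mul_mpolyC msymZ msym1.
by rewrite -horner_map /= msymXi -map_poly_comp; congr (_.[_]); exact: eq_map_poly.
Qed.

Lemma Uelt_symmetric (g : {poly k}) : Uelt n g \is symmetric.
Proof.
apply/issymP => s; rewrite rmorph_prod [RHS](reindex_inj (@perm_inj _ s)) /=.
by apply: eq_bigr => i _; exact: msym_horner_X.
Qed.

Lemma Uelt1 : Uelt n (1 : {poly k}) = 1.
Proof. by rewrite /Uelt rmorph1 big1 // => i _; rewrite hornerC. Qed.

Lemma UeltM (g1 g2 : {poly k}) : Uelt n (g1 * g2) = Uelt n g1 * Uelt n g2.
Proof. by rewrite /Uelt -big_split; apply: eq_bigr => i _; rewrite rmorphM hornerM. Qed.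

Lemma Uelt_neq0 (g : {poly k}) : g.[0] != 0 -> Uelt n g != 0.
Proof.
move=> g00; apply/eqP => /(congr1 (meval (fun _ => 0))).
rewrite meval0 rmorph_prod /= (eq_bigr (fun _ => g.[0])).
  by rewrite prodr_const; apply/eqP; rewrite expf_neq0.
move=> i _; rewrite -horner_map /= mevalXU -map_poly_comp map_poly_id // => c _ /=.
exact: mevalC.
Qed.

Lemma in_Hn_frac {f} : ksym f -> Hn f%:F.
Proof.
move=> kf; exists f, 1; split=> //; first by rewrite hornerC oner_neq0.
by rewrite Uelt1 rmorph1 divr1.
Qed.

Lemma in_Hn_subring : subring_pred Hn.
Proof.
have U_frac_neq0 (g : {poly k}) : g.[0] != 0 -> (Uelt n g)%:F != 0.
  by move=> g00; rewrite tofrac_eq0; exact: Uelt_neq0.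
split.
- by have := in_Hn_frac (subring0 in_ksym_subring); rewrite tofrac0.
- by have := in_Hn_frac (subring1 in_ksym_subring); rewrite tofrac1.
- move=> _ _ [f1 [g1 [kf1 g10 ->]]] [f2 [g2 [kf2 g20 ->]]].
  exists (f1 * Uelt n g2 + f2 * Uelt n g1), (g1 * g2); split.
  + by apply: (subringD in_ksym_subring); apply: (subringM in_ksym_subring) => //;
      exact/in_ksym_symmetric/Uelt_symmetric.
  + by rewrite hornerM mulf_neq0.
  + by rewrite addf_div ?U_frac_neq0 // UeltM !rmorphM rmorphD /= !rmorphM.
- move=> _ [f [g [kf g0 ->]]]; exists (- f), g; split=> //.
    exact: (subringN in_ksym_subring).
  by rewrite rmorphN mulNr.
- move=> _ _ [f1 [g1 [kf1 g10 ->]]] [f2 [g2 [kf2 g20 ->]]].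
  exists (f1 * f2), (g1 * g2); split.
  + exact: (subringM in_ksym_subring).
  + by rewrite hornerM mulf_neq0.
  + by rewrite mulf_div UeltM !rmorphM.
Qed.

Definition Fgen : {poly T} := \prod_(i < n) ('X - ('X_i)%:P).

Lemma Uelt_bezout (g : {poly k}) : exists W Q : {poly T},
  coefs_in ksym Q /\ Fgen * W = (Uelt n g)%:P + Cpoly g * Q.
Proof.
have ksR := in_ksym_subring.
set G := Cpoly g; set Pg := \prod_(i < n) ('X - (G.['X_i])%:P).
have [h hE] := prod_sub_horner_factor G (fun i : 'I_n => 'X_i).
have PgG : Pg \Po G = h * Fgen.
  by rewrite -hE rmorph_prod; apply: eq_bigr => i _; rewrite /= comp_polyB comp_polyX comp_polyC.
have Pg0 : Pg`_0 = (-1) ^+ n * Uelt n g.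
  rewrite -horner_coef0 horner_prod (eq_bigr (fun i => - G.['X_i])) ?prodrN ?card_ord //.
  by move=> i _; rewrite hornerXsubC sub0r.
have Pg_sym j : Pg`_j \is symmetric.
  apply/issymP => s; rewrite -(coef_map (msym s)).
  suff -> : map_poly (msym s) Pg = Pg by [].
  rewrite rmorph_prod [RHS](reindex_inj (@perm_inj _ s)) /=; apply: eq_bigr => i _.
  by rewrite map_polyXsubC /= msym_horner_X.
have GR : coefs_in ksym G by move=> j; rewrite coef_map; exact: in_ksymC.
exists ((-1) ^+ n * h), ((-1) ^+ n * (drop_poly 1 Pg \Po G)); split.
  apply: (coefs_inM ksR); first exact: (coefs_inX ksR n (coefs_inN ksR (coefs_in1 ksR))).
  rewrite comp_polyE; apply: (coefs_in_sum ksR) => i _.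
  apply: (coefs_inZ ksR); last exact: (coefs_inX ksR).
  by rewrite coef_drop_poly; exact/in_ksym_symmetric/Pg_sym.
rewrite mulrCA [Fgen * h]mulrC -PgG comp_poly_coef0 Pg0 polyCM rmorph_sign mulrDr signrMK.
by rewrite [_ * G]mulrC mulrCA.
Qed.

Lemma coef_Fpsi (A : comNzRingType) (psi : K -> A) j : (Fpsi psi)`_j =
  if (j <= n)%N then (-1) ^+ (n - j) * psi (Defs.esym k n (n - j))%:F else 0.
Proof.
rewrite coef_sum; case: leqP => [lejn | ltnj]; last first.
  by rewrite big1 // => i _; rewrite coefZ coefXn gtn_eqF ?mulr0 //; have := ltn_ord i; lia.
have ltnjn : (n - j < n.+1)%N by rewrite ltnS leq_subr.
rewrite (bigD1 (Ordinal ltnjn)) //= coefZ coefXn subKn // eqxx mulr1.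
rewrite big1 ?addr0 // => i; rewrite -val_eqE /= coefZ coefXn => /eqP ne_i.
by case: eqP => [eq_j | _]; [have := ltn_ord i; lia | rewrite mulr0].
Qed.

Lemma Fpsi_monic_size {A : comNzRingType} {psi : K -> A} :
  psi 1 = 1 -> Fpsi psi \is monic /\ size (Fpsi psi) = n.+1.
Proof.
move=> psi1; have coefn : (Fpsi psi)`_n = 1.
  by rewrite coef_Fpsi leqnn subnn mul1r /Defs.esym mesym0E tofrac1.
have sizeF : size (Fpsi psi) = n.+1.
  apply/anti_leq/andP; split; first by apply/leq_sizeP => j ltnj; rewrite coef_Fpsi leqNgt ltnj.
  by rewrite ltnNge; apply/negP => /(nth_default 0); rewrite coefn => /eqP; rewrite oner_eq0.
by split=> //; apply/monicP; rewrite lead_coefE sizeF.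
Qed.

Lemma meval_mesymX m :
  (mesym n (T : idomainType) m).@[tnth [tuple ('X_i : T) | i < n]] = mesym n k m.
Proof.
rewrite !mesymE raddf_sum /=; apply: eq_bigr => h _.
by rewrite mevalX [RHS]mpolyXE_id; apply: eq_bigr => i _; rewrite tnth_mktuple.
Qed.

Lemma coef_Fgen j : Fgen`_j =
  if (j <= n)%N then (-1) ^+ (n - j) * Defs.esym k n (n - j) else 0.
Proof.
case: leqP => [lejn | ltnj].
  have := mroots_coeff [tuple ('X_i : T) | i < n] (inord (n - j)).
  rewrite inordK ?ltnS ?leq_subr // subKn // big_tuple meval_mesymX /Defs.esym => <-.
  by apply: (congr1 (fun p : {poly T} => p`_j)); apply: eq_bigr => i _; rewrite tnth_mktuple.
by rewrite nth_default // size_prod_XsubC /index_enum unlock -enumT -cardT card_ord.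
Qed.

Lemma map_Fgen : map_poly (@tofrac T) Fgen = Fpsi (fun x : K => x).
Proof.
apply/polyP => j; rewrite coef_map coef_Fpsi coef_Fgen.
by case: leqP => _; rewrite /= ?rmorph0 // rmorphM rmorph_sign.
Qed.

Lemma Fpsi_id_bezout (g : {poly k}) : g.[0] != 0 -> exists v u : {poly K},
  coefs_in Hn v /\
  v * map_poly (fun c : k => (c%:MP : T)%:F) g + u * Fpsi (fun x : K => x) = 1.
Proof.
move=> g00; have [W [Q [QR FgenWE]]] := Uelt_bezout g.
set d := (Uelt n g)%:F; have d_neq0 : d != 0 by rewrite tofrac_eq0; exact: Uelt_neq0.
set tf := map_poly (@tofrac T).
have Cg : tf (Cpoly g) = map_poly (fun c : k => (c%:MP : T)%:F) g by rewrite /tf -map_poly_comp.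
exists (- d^-1 *: tf Q), (d^-1 *: tf W); split.
  move=> j; rewrite coefZ coef_map; exists (- Q`_j), g; split=> //.
    exact: (subringN in_ksym_subring).
  by rewrite tofracN mulNr mulrC mulNr.
rewrite -map_Fgen -Cg -!scalerAl scaleNr addrC -scalerBr.
rewrite [tf W * _]mulrC [tf Q * _]mulrC -!rmorphM -rmorphB FgenWE addrK.
by rewrite /= map_polyC /= -/d -mul_polyC -polyCM mulVf.
Qed.

Lemma coefs_in_Fpsi_id : coefs_in Hn (Fpsi (fun x : K => x)).
Proof.
move=> j; rewrite coef_Fpsi; case: ifP => _; last exact: (subring0 in_Hn_subring).
apply: (subringM in_Hn_subring); first exact: (subring_sign in_Hn_subring).
exact/in_Hn_frac/in_ksym_symmetric/mesym_sym.
Qed.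

Lemma loc_quot_basis_Fpsi_id :
  loc_quot_basis (fun c : k => (c%:MP : T)%:F) Hn (Fpsi (fun x : K => x)) n.
Proof.
have [monF sizeF] := @Fpsi_monic_size _ (fun x : K => x) erefl.
apply: (loc_quot_basis_of_invertible_modF in_Hn_subring monF coefs_in_Fpsi_id
  _ _ _ sizeF Fpsi_id_bezout).
- by move=> c; exact/in_Hn_frac/in_ksymC.
- by rewrite /= mpolyC0 tofrac0.
- by rewrite /= mpolyC1 tofrac1.
Qed.

End SymmetricFunctions.

Section Specialization.
Variables (k : fieldType) (n : nat).
Local Notation T := {mpoly k[n]}.
Local Notation K := {fraction T}.
Local Notation Hn := (@in_Hn k n).
Variables (A : comAlgType k) (psi : K -> A).
Hypotheses (psiD : forall x y, Hn x -> Hn y -> psi (x + y) = psi x + psi y)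
           (psiM : forall x y, Hn x -> Hn y -> psi (x * y) = psi x * psi y)
           (psiC : forall c : k, psi (c%:MP : T)%:F = c%:A).

Lemma psi0 : psi 0 = 0.
Proof. exact: (morph_in0 in_Hn_subring psiD). Qed.

Lemma psi1 : psi 1 = 1.
Proof. by rewrite -tofrac1 -mpolyC1 psiC scale1r. Qed.

Lemma map_poly_psiC (g : {poly k}) :
  map_poly psi (map_poly (fun c : k => (c%:MP : T)%:F) g) = map_poly (fun c : k => c%:A) g.
Proof.
apply/polyP => j; rewrite !coef_map_id0 ?psi0 //= ?psiC ?scale0r // mpolyC0 tofrac0.
Qed.

Lemma map_poly_psi_Fpsi_id : map_poly psi (Fpsi (fun x : K => x)) = Fpsi psi.
Proof.
apply/polyP => j; rewrite coef_map_id0 ?psi0 // !coef_Fpsi; case: ifP => _; last exact: psi0.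
rewrite (morph_in_signM in_Hn_subring psiD) //.
exact/in_Hn_frac/in_ksym_symmetric/mesym_sym.
Qed.

Lemma Fpsi_bezout (g : {poly k}) : g.[0] != 0 -> exists v u : {poly A},
  coefs_in (fun _ => True) v /\ v * map_poly (fun c : k => c%:A) g + u * Fpsi psi = 1.
Proof.
move=> g00; have [v [u [vR vGuF]]] := @Fpsi_id_bezout k n g g00.
have [monF _] := @Fpsi_monic_size k n _ (fun x : K => x) erefl.
have GR : coefs_in Hn (map_poly (fun c : k => (c%:MP : T)%:F) g).
  by move=> j; rewrite coef_map_id0 /= ?mpolyC0 ?tofrac0 //; exact/in_Hn_frac/in_ksymC.
have uR := coefs_in_bezout_cofactor in_Hn_subring monF coefs_in_Fpsi_id vR GR vGuF.
have FR := @coefs_in_Fpsi_id k n.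
exists (map_poly psi v), (map_poly psi u); split=> //.
rewrite -map_poly_psiC -map_poly_psi_Fpsi_id.
rewrite -!(map_poly_inM in_Hn_subring psiD psiM) // -(map_poly_inD in_Hn_subring psiD).
- rewrite vGuF; apply/polyP => j; rewrite coef_map_id0 ?psi0 // !coef1.
  by case: (j == 0)%N; [exact: psi1 | exact: psi0].
- exact: (coefs_inM in_Hn_subring).
- exact: (coefs_inM in_Hn_subring).
Qed.

Lemma loc_quot_basis_Fpsi : loc_quot_basis (fun c : k => c%:A) (fun _ : A => True) (Fpsi psi) n.
Proof.
have [monF sizeF] := Fpsi_monic_size psi1.
have trivR : subring_pred (fun _ : A => True) by split.
apply: (loc_quot_basis_of_invertible_modF trivR monF _ _ _ _ sizeF Fpsi_bezout) => //.
- exact: scale0r.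
- exact: scale1r.
Qed.

End Specialization.

Theorem proposition4p2 (k : fieldType) (n : nat) (hn : (0 < n)%N) :
  (* general case: any k-algebra homomorphism psi : H_n -> A *)
  (forall (A : comAlgType k) (psi : {fraction {mpoly k[n]}} -> A),
     (forall x y, in_Hn x -> in_Hn y -> psi (x + y) = psi x + psi y) ->
     (forall x y, in_Hn x -> in_Hn y -> psi (x * y) = psi x * psi y) ->
     (forall c : k, psi (c%:MP)%:F = c%:A) ->
     loc_quot_basis (fun c : k => c%:A) (fun _ : A => True) (Fpsi psi) n)
  /\
  (* particular case A = H_n, psi = id *)
  loc_quot_basis (fun c : k => (c%:MP : {mpoly k[n]})%:F)
    (@in_Hn k n) (Fpsi (fun x : {fraction {mpoly k[n]}} => x)) n.
Proof.
split; last exact: loc_quot_basis_Fpsi_id.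
by move=> A psi psiD psiM psiC; exact: loc_quot_basis_Fpsi psiD psiM psiC.
Qed.
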